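(* Let $x,y>0$, let $\theta\in(0,\frac{\pi}{2})$, and let $\mathbf z=(xy\cos\theta,x^2,y^2)$. For $\theta\in(\arccos\frac{2}{\pi},\frac{\pi}{3})$ let $\beta_1\in(1,\infty)$ be the unique solution of $$\arccos\left(\frac{1}{\beta_1}\right)=\frac{(\beta_1+\cos\theta)\sqrt{\beta_1^2-1}}{\beta_1(\beta_1\cos\theta+1)}.$$ Let $\Lambda^*_-$ be as defined in the context. Then $\Lambda^*_-(\mathbf z)=\frac{x^2}{2}+\frac{y^2}{2}-1-\ln(xy)+E(\theta)$, where: - $E(\theta)=0$ if $\theta\in(0,\arccos\frac{2}{\pi}]$; - $E(\theta)=\ln\left(\frac{\pi\beta_1(\beta_1\cos\theta+1)}{2(\cos\theta+\beta_1)^2}\right)$ if $\theta\in(\arccos\frac{2}{\pi},\frac{\pi}{3})$; - $E(\theta)=\ln\left(\frac{\pi}{2(1+\cos\theta)}\right)$ if $\theta\in[\frac{\pi}{3},\frac{\pi}{2})$.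
   Context: For $\boldsymbol\lambda=(\lambda_1,\lambda_2,\lambda_3)\in\mathbb{R}^3$ let $D=\lambda_1^2-(1-2\lambda_2)(1-2\lambda_3)$, and let $$S=\{\boldsymbol\lambda:\lambda_2<\tfrac12,\ \lambda_3<\tfrac12,\ D<0\}.$$ For $\boldsymbol\lambda\in S$ put $$\Lambda(\boldsymbol\lambda)=\ln\left(\pi+2\arctan\left(\frac{\lambda_1}{\sqrt{-D}}\right)\right)-\ln\pi-\tfrac12\ln(-D).$$ This is the log moment generating function of $(\hat X\hat Y,\hat X^2,\hat Y^2)$ for independent half-normal $\hat X,\hat Y$. Define $$\Lambda^*_-(\mathbf z)=\sup_{\boldsymbol\lambda\in S,\ \lambda_1<0}\{\langle\boldsymbol\lambda,\mathbf z\rangle-\Lambda(\boldsymbol\lambda)\}.$$ *)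

From Stdlib Require Import Reals.
Open Scope R_scope.

Definition Dlam (l1 l2 l3 : R) : R := l1 ^ 2 - (1 - 2 * l2) * (1 - 2 * l3).

Definition in_S (l1 l2 l3 : R) : Prop :=
  l2 < 1 / 2 /\ l3 < 1 / 2 /\ Dlam l1 l2 l3 < 0.

Definition Lam (l1 l2 l3 : R) : R :=
  ln (PI + 2 * atan (l1 / sqrt (- Dlam l1 l2 l3))) - ln PI
  - / 2 * ln (- Dlam l1 l2 l3).

Definition LamStarMinus_set (z1 z2 z3 : R) (v : R) : Prop :=
  exists l1 l2 l3 : R,
    in_S l1 l2 l3 /\ l1 < 0 /\
    v = l1 * z1 + l2 * z2 + l3 * z3 - Lam l1 l2 l3.

Definition LamStarMinus_eq (z1 z2 z3 w : R) : Prop :=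
  is_lub (LamStarMinus_set z1 z2 z3) w.

Definition beta1_eq (th b : R) : Prop :=
  acos (/ b) = (b + cos th) * sqrt (b ^ 2 - 1) / (b * (b * cos th + 1)).

From Stdlib Require Import Reals Lra Psatz.
From Coquelicot Require Import Coquelicot.
Open Scope R_scope.

(* Put [a = 1 - 2 l2], [b = 1 - 2 l3] and [c = cos th].  Every [l] in [S] with [l1 < 0] has a
   polar form [l1 = - r cos p], [sqrt (-D) = r sin p] with [r = sqrt (a b)] and [0 < p < PI/2],
   and then [PI + 2 atan (l1 / sqrt (-D)) = 2 p].  For fixed [p], AM-GM in [(a, b)] and
   [ln u <= u - 1] in [r] bound the objective by [base + ln (PI/2 * ratio c p)], where
   [ratio c p = sin p / (p (1 + c cos p))], and the bound is attained; hence
   [Λ*_-(z) = base + ln (PI/2 * sup ratio c)].  The derivative of [ratio c] has the sign of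
   [- crit c p], with [crit c p = sin p (1 + c cos p) - p (c + cos p)], which vanishes at 0 and
   changes sign at most once on [(0, PI/2]].  For [c <= 1/2] it stays positive and the sup is the
   limit [1 / (1 + c)] at 0; for [c >= 2/PI] it stays negative and the sup is
   [ratio c (PI/2) = 2/PI]; in between its unique zero [p] is the maximiser, and
   [b = 1 / cos p] is exactly [β1]. *)

Lemma MVT_is_derive (f f' : R -> R) a b : a < b ->
  (forall t, a <= t <= b -> is_derive f t (f' t)) ->
  exists xi, a < xi < b /\ f b - f a = f' xi * (b - a).
Proof.
  intros Hab Hd.
  destruct (MVT_cor2 f f' a b Hab) as [xi [E Hxi]].
  - intros t Ht. apply is_derive_Reals, Hd, Ht.
  - exists xi; split; assumption.
Qed.

Lemma PI_gt_3 : 3 < PI.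
Proof. pose proof PI2_3_2; lra. Qed.

Lemma cos_in_01 t : 0 < t < PI / 2 -> 0 < cos t < 1.
Proof.
  intros Ht; pose proof PI_gt_3; split.
  - apply cos_gt_0; lra.
  - rewrite <- cos_0; apply cos_decreasing_1; lra.
Qed.

Lemma acos_in_0_PI2 u : 0 < u < 1 -> 0 < acos u < PI / 2.
Proof.
  intros Hu. pose proof (acos_bound_lt u ltac:(lra)).
  assert (cos (acos u) = u) by (apply cos_acos; lra).
  split; [lra |]. destruct (Rlt_or_le (acos u) (PI / 2)) as [|Hge]; [easy |].
  pose proof (cos_le_0 _ Hge ltac:(lra)); lra.
Qed.

Lemma at_right_interval a b : a < b -> at_right a (fun p => a < p < b).
Proof.
  intros Hab. unfold at_right, within.
  apply (filter_imp (fun p => p < b)); [intros; lra | exact (open_lt b a Hab)].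
Qed.

Lemma at_left_interval a b : a < b -> at_left b (fun p => a < p < b).
Proof.
  intros Hab. unfold at_left, within.
  apply (filter_imp (fun p => a < p)); [intros; lra | exact (open_gt a b Hab)].
Qed.

Lemma filterlim_at_right_of_is_lim (f : R -> R) (x l : R) :
  is_lim f x l -> filterlim f (at_right x) (locally l).
Proof.
  intros Hlim. eapply filterlim_filter_le_1; [|exact Hlim].
  intros P HP. unfold at_right, within. simpl in HP. unfold locally', within in HP.
  revert HP; apply filter_imp. intros y H Hxy. apply H; lra.
Qed.

Lemma sin_x_sub_x_cos_pos t : 0 < t <= PI / 2 -> 0 < sin t - t * cos t.
Proof.
  intros Ht.
  destruct (MVT_is_derive (fun u => sin u - u * cos u) (fun u => u * sin u) 0 t)
    as [xi [Hxi E]]; [lra | intros u _; auto_derive; [easy | ring] |].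
  rewrite sin_0, cos_0 in E.
  assert (0 < sin xi) by (apply sin_gt_0; pose proof PI_gt_3; lra).
  assert (0 < xi * sin xi * t) by (apply Rmult_lt_0_compat; nra).
  lra.
Qed.

Lemma sin_div_lt a b : 0 < a < b -> b <= PI / 2 -> a * sin b < b * sin a.
Proof.
  intros Hab Hb.
  destruct (MVT_is_derive (fun t => sin t / t) (fun t => (t * cos t - sin t) / (t * t)) a b)
    as [xi [Hxi E]]; [lra | intros t Ht; auto_derive; [lra | field; lra] |].
  assert (Hd : (xi * cos xi - sin xi) / (xi * xi) < 0).
  { apply Rdiv_neg_pos; [pose proof (sin_x_sub_x_cos_pos xi); lra | nra]. }
  assert (Hq : sin b / b < sin a / a) by nra.
  apply (Rmult_lt_compat_l (a * b)) in Hq; [|nra].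
  replace (a * b * (sin b / b)) with (a * sin b) in Hq by (field; lra).
  replace (a * b * (sin a / a)) with (b * sin a) in Hq by (field; lra).
  exact Hq.
Qed.

Definition crit (c p : R) : R := sin p * (1 + c * cos p) - p * (c + cos p).

Lemma crit_0 c : crit c 0 = 0.
Proof. unfold crit; rewrite sin_0; ring. Qed.

Lemma crit_PI2 c : crit c (PI / 2) = 1 - c * PI / 2.
Proof. unfold crit; rewrite sin_PI2, cos_PI2; field. Qed.

Lemma is_derive_crit c p : is_derive (crit c) p (sin p * (p - 2 * c * sin p)).
Proof.
  unfold crit; auto_derive; [easy |].
  pose proof (sin2_cos2 p) as E; unfold Rsqr in E.
  assert (c * (sin p * sin p + cos p * cos p - 1) = 0) by (rewrite E; ring).
  lra.
Qed.

Lemma continuity_crit c : continuity (crit c).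
Proof.
  intros t. apply continuity_pt_filterlim, (ex_derive_continuous (crit c)).
  eexists; apply is_derive_crit.
Qed.

(* The factor [t - 2 c sin t] of [crit c]' has the sign of [t / sin t - 2 c], and [t / sin t]
   increases. *)
Lemma crit_deriv_factor_pos c s t : 0 < s < t -> t <= PI / 2 ->
  0 <= s - 2 * c * sin s -> 0 < t - 2 * c * sin t.
Proof.
  intros Hst Ht Hs.
  assert (0 < sin s) by (apply sin_gt_0; lra).
  assert (0 < sin t) by (apply sin_gt_0; lra).
  pose proof (sin_div_lt s t Hst Ht). nra.
Qed.

Lemma crit_pos_after c p q : 0 < p < q -> q <= PI / 2 -> 0 <= crit c p -> 0 < crit c q.
Proof.
  intros Hpq Hq Hp.
  destruct (MVT_is_derive (crit c) (fun t => sin t * (t - 2 * c * sin t)) 0 p)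
    as [eta [Heta E0]]; [lra | intros; apply is_derive_crit |].
  destruct (MVT_is_derive (crit c) (fun t => sin t * (t - 2 * c * sin t)) p q)
    as [xi [Hxi E1]]; [lra | intros; apply is_derive_crit |].
  rewrite crit_0 in E0.
  assert (0 < sin eta) by (apply sin_gt_0; lra).
  assert (0 < sin xi) by (apply sin_gt_0; lra).
  assert (0 < sin eta * p) by (apply Rmult_lt_0_compat; lra).
  assert (Heta' : 0 <= eta - 2 * c * sin eta) by nra.
  pose proof (crit_deriv_factor_pos c eta xi ltac:(lra) ltac:(lra) Heta').
  assert (0 < sin xi * (xi - 2 * c * sin xi) * (q - p))
    by (repeat apply Rmult_lt_0_compat; lra).
  lra.
Qed.

Lemma crit_neg_before c t q : 0 < t < q -> q <= PI / 2 -> crit c q <= 0 -> crit c t < 0.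
Proof.
  intros Htq Hq Hcq. destruct (Rlt_or_le (crit c t) 0) as [|Hnn]; [easy |].
  pose proof (crit_pos_after c t q Htq Hq Hnn); lra.
Qed.

Lemma crit_pos_small c p : c <= 1 / 2 -> 0 < p <= PI / 2 -> 0 < crit c p.
Proof.
  intros Hc Hp.
  destruct (MVT_is_derive (crit c) (fun t => sin t * (t - 2 * c * sin t)) 0 p)
    as [eta [Heta E]]; [lra | intros; apply is_derive_crit |].
  rewrite crit_0 in E.
  assert (0 < sin eta) by (apply sin_gt_0; lra).
  assert (sin eta < eta) by (apply sin_lt_x; lra).
  assert (0 < sin eta * (eta - 2 * c * sin eta) * p)
    by (repeat apply Rmult_lt_0_compat; nra).
  lra.
Qed.

Lemma crit_neg_exists c : 1 / 2 < c -> exists p, 0 < p < PI / 2 /\ crit c p < 0.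
Proof.
  intros Hc. pose proof PI_gt_3.
  assert (Hev : at_right 0 (fun p => 1 / (2 * c) < sin p / p)).
  { apply (filterlim_at_right_of_is_lim _ _ _ is_lim_sinc_0).
    apply open_gt. apply (Rmult_lt_reg_r (2 * c)); [lra|].
    replace (1 / (2 * c) * (2 * c)) with 1 by (field; lra). lra. }
  assert (Hboth : at_right 0 (fun p => 1 / (2 * c) < sin p / p /\ 0 < p < PI / 2))
    by (apply filter_and; [exact Hev | apply at_right_interval; lra]).
  destruct (filter_ex _ Hboth) as [p [Hsinc Hp]].
  assert (Hfac : p - 2 * c * sin p < 0).
  { apply (Rmult_lt_compat_r (2 * c * p)) in Hsinc; [|nra].
    replace (1 / (2 * c) * (2 * c * p)) with p in Hsinc by (field; lra).
    replace (sin p / p * (2 * c * p)) with (2 * c * sin p) in Hsinc by (field; lra).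
    lra. }
  exists p; split; [exact Hp|].
  destruct (MVT_is_derive (crit c) (fun t => sin t * (t - 2 * c * sin t)) 0 p)
    as [eta [Heta E]]; [lra | intros; apply is_derive_crit |].
  rewrite crit_0 in E.
  assert (0 < sin eta) by (apply sin_gt_0; lra).
  destruct (Rlt_or_le (eta - 2 * c * sin eta) 0) as [Hneg | Hnn].
  - assert (0 < sin eta * (2 * c * sin eta - eta) * p)
      by (repeat apply Rmult_lt_0_compat; lra).
    lra.
  - pose proof (crit_deriv_factor_pos c eta p ltac:(lra) ltac:(lra) Hnn). lra.
Qed.

Lemma crit_zero_exists c : 1 / 2 < c -> c < 2 / PI ->
  exists p, 0 < p < PI / 2 /\ crit c p = 0.
Proof.
  intros Hc Hc'.
  destruct (crit_neg_exists c Hc) as [p1 [Hp1 Hneg]].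
  assert (Hend : 0 < crit c (PI / 2)).
  { rewrite crit_PI2. apply (Rmult_lt_compat_r PI) in Hc'; [|lra].
    replace (2 / PI * PI) with 2 in Hc' by (field; lra). lra. }
  destruct (IVT (crit c) p1 (PI / 2) (continuity_crit c) ltac:(lra) Hneg Hend)
    as [p [Hp E]].
  exists p; split; [|exact E].
  split; [lra|].
  destruct (Rle_lt_or_eq_dec p (PI / 2) (proj2 Hp)) as [|Ep]; [easy|].
  rewrite Ep in E; lra.
Qed.

Lemma crit_zero_unique c p q : 0 < p <= PI / 2 -> 0 < q <= PI / 2 ->
  crit c p = 0 -> crit c q = 0 -> p = q.
Proof.
  intros Hp Hq Ep Eq.
  destruct (Rtotal_order p q) as [Hlt | [Heq | Hgt]]; [| exact Heq |].
  - pose proof (crit_pos_after c p q ltac:(lra) ltac:(lra) ltac:(lra)); lra.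
  - pose proof (crit_pos_after c q p ltac:(lra) ltac:(lra) ltac:(lra)); lra.
Qed.

Definition ratio (c p : R) : R := sin p / (p * (1 + c * cos p)).

Definition ratio_set (c v : R) : Prop := exists p, 0 < p < PI / 2 /\ v = ratio c p.

Lemma one_plus_c_cos_pos c p : 0 <= c < 1 -> 0 < 1 + c * cos p.
Proof. intros Hc; pose proof (COS_bound p); nra. Qed.

Lemma ratio_pos c p : 0 <= c < 1 -> 0 < p < PI -> 0 < ratio c p.
Proof.
  intros Hc Hp; pose proof (one_plus_c_cos_pos c p Hc).
  apply Rdiv_lt_0_compat; [apply sin_gt_0; lra | nra].
Qed.

Lemma ratio_PI2 c : ratio c (PI / 2) = 2 / PI.
Proof. unfold ratio; rewrite sin_PI2, cos_PI2; pose proof PI_gt_3; field; lra. Qed.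

Lemma is_derive_ratio c p : 0 < p -> 0 <= c < 1 ->
  is_derive (ratio c) p (- crit c p / (p * (1 + c * cos p)) ^ 2).
Proof.
  intros Hp Hc; pose proof (one_plus_c_cos_pos c p Hc).
  unfold ratio, crit; auto_derive; [nra |].
  pose proof (sin2_cos2 p) as E; unfold Rsqr in E.
  apply Rminus_diag_uniq.
  transitivity (c * p * (sin p * sin p + cos p * cos p - 1) / (p * (1 + c * cos p)) ^ 2).
  - field; lra.
  - rewrite E; field; lra.
Qed.

Lemma ratio_increasing c a b : 0 <= c < 1 -> 0 < a < b ->
  (forall t, a < t < b -> crit c t < 0) -> ratio c a < ratio c b.
Proof.
  intros Hc Hab Hneg.
  destruct (MVT_is_derive (ratio c) (fun t => - crit c t / (t * (1 + c * cos t)) ^ 2) a b)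
    as [xi [Hxi E]]; [lra | intros; apply is_derive_ratio; lra |].
  pose proof (one_plus_c_cos_pos c xi Hc). pose proof (Hneg xi Hxi).
  assert (0 < - crit c xi / (xi * (1 + c * cos xi)) ^ 2 * (b - a)).
  { apply Rmult_lt_0_compat; [apply Rdiv_lt_0_compat; [lra | apply pow_lt; nra] | lra]. }
  lra.
Qed.

Lemma ratio_decreasing c a b : 0 <= c < 1 -> 0 < a < b ->
  (forall t, a < t < b -> 0 < crit c t) -> ratio c b < ratio c a.
Proof.
  intros Hc Hab Hpos.
  destruct (MVT_is_derive (ratio c) (fun t => - crit c t / (t * (1 + c * cos t)) ^ 2) a b)
    as [xi [Hxi E]]; [lra | intros; apply is_derive_ratio; lra |].
  pose proof (one_plus_c_cos_pos c xi Hc). pose proof (Hpos xi Hxi).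
  assert (0 < crit c xi / (xi * (1 + c * cos xi)) ^ 2 * (b - a)).
  { apply Rmult_lt_0_compat; [apply Rdiv_lt_0_compat; [lra | apply pow_lt; nra] | lra]. }
  unfold Rdiv in *. lra.
Qed.

Lemma ratio_lim_0 c : 0 <= c < 1 ->
  filterlim (ratio c) (at_right 0) (locally (1 / (1 + c))).
Proof.
  intros Hc. apply filterlim_at_right_of_is_lim.
  apply (is_lim_ext_loc (fun p => (sin p / p) / (1 + c * cos p))).
  { exists (mkposreal 1 Rlt_0_1). intros p _ Hp.
    pose proof (one_plus_c_cos_pos c p Hc). unfold ratio. field; lra. }
  replace (Finite (1 / (1 + c))) with (Rbar_div 1 (1 + c * cos 0))
    by (rewrite cos_0; simpl; f_equal; field; lra).
  apply (is_lim_div (fun p => sin p / p) (fun p => 1 + c * cos p) 0 1 (1 + c * cos 0));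
    [exact is_lim_sinc_0 | | rewrite cos_0; intros E; injection E; lra | easy].
  apply (is_lim_continuity (fun p => 1 + c * cos p)). apply continuity_pt_filterlim.
  apply (ex_derive_continuous (fun p => 1 + c * cos p)). auto_derive; easy.
Qed.

Lemma ratio_lim_PI2 c : 0 <= c < 1 ->
  filterlim (ratio c) (at_left (PI / 2)) (locally (2 / PI)).
Proof.
  intros Hc. rewrite <- (ratio_PI2 c).
  eapply filterlim_filter_le_1; [apply (filter_le_within (F := locally (PI / 2))) |].
  apply (ex_derive_continuous (ratio c)).
  eexists; apply is_derive_ratio; [pose proof PI_gt_3; lra | exact Hc].
Qed.

Lemma is_lub_ratio_set_of_lim c s F {FF : ProperFilter F} :
  (forall p, 0 < p < PI / 2 -> ratio c p <= s) ->
  F (fun p => 0 < p < PI / 2) -> filterlim (ratio c) F (locally s) ->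
  is_lub (ratio_set c) s.
Proof.
  intros Hub Hin Hlim. split.
  - intros v [p [Hp ->]]. exact (Hub p Hp).
  - intros K HK.
    apply (filterlim_le (F := F) (ratio c) (fun _ => K) s K); [| exact Hlim | apply filterlim_const].
    revert Hin; apply filter_imp. intros p Hp. apply HK. exists p; split; [exact Hp | reflexivity].
Qed.

Lemma ratio_lub_large c : 2 / PI <= c < 1 -> is_lub (ratio_set c) (2 / PI).
Proof.
  intros Hc. pose proof PI_gt_3.
  assert (H2PI : 0 < 2 / PI) by (apply Rdiv_lt_0_compat; lra).
  assert (Hend : crit c (PI / 2) <= 0).
  { rewrite crit_PI2.
    assert (Hc2 : 2 / PI * PI <= c * PI) by (apply Rmult_le_compat_r; lra).
    replace (2 / PI * PI) with 2 in Hc2 by (field; lra). lra. }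
  apply (is_lub_ratio_set_of_lim c _ (at_left (PI / 2))).
  - intros p Hp. rewrite <- (ratio_PI2 c). left.
    apply ratio_increasing; [lra | lra |].
    intros t Ht. apply (crit_neg_before c t (PI / 2)); lra.
  - apply at_left_interval; lra.
  - apply ratio_lim_PI2; lra.
Qed.

Lemma ratio_lub_small c : 0 <= c <= 1 / 2 -> is_lub (ratio_set c) (1 / (1 + c)).
Proof.
  intros Hc. pose proof PI_gt_3.
  apply (is_lub_ratio_set_of_lim c _ (at_right 0)).
  - intros p Hp.
    apply (filterlim_le (F := at_right 0) (fun _ => ratio c p) (ratio c) (ratio c p) (1 / (1 + c)));
      [| apply filterlim_const | apply ratio_lim_0; lra].
    apply (filter_imp (fun e => 0 < e < p)); [| apply at_right_interval; lra].
    intros e He. left. apply ratio_decreasing; [lra | lra |].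
    intros t Ht. apply crit_pos_small; lra.
  - apply at_right_interval; lra.
  - apply ratio_lim_0; lra.
Qed.

Lemma ratio_lub_crit c p0 : 0 <= c < 1 -> 0 < p0 < PI / 2 -> crit c p0 = 0 ->
  is_lub (ratio_set c) (ratio c p0).
Proof.
  intros Hc Hp0 E0. split.
  - intros v [p [Hp ->]].
    destruct (Rtotal_order p p0) as [Hlt | [-> | Hgt]]; [left | right; reflexivity | left].
    + apply ratio_increasing; [lra | lra |]. intros t Ht.
      apply (crit_neg_before c t p0); lra.
    + apply ratio_decreasing; [lra | lra |]. intros t Ht.
      apply (crit_pos_after c p0 t); lra.
  - intros K HK. apply HK. exists p0; split; [exact Hp0 | reflexivity].
Qed.

Lemma ln_le_sub_1 u : 0 < u -> ln u <= u - 1.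
Proof. intros Hu; pose proof (exp_ineq1_le (ln u)); rewrite exp_ln in *; lra. Qed.

Lemma le_exp_of_ln_le a b : 0 < a -> ln a <= b -> a <= exp b.
Proof.
  intros Ha Hle. rewrite <- (exp_ln a) by exact Ha.
  destruct Hle as [Hlt | ->]; [left; apply exp_increasing, Hlt | right; reflexivity].
Qed.

(* With [l1 = - r cos p] and [-D = (r sin p)^2], the argument of the arctangent in [Lam] is
   [tan (p - PI / 2)]. *)
Lemma Lam_polar l1 l2 l3 r p : 0 < r -> 0 < p < PI ->
  l1 = - r * cos p -> Dlam l1 l2 l3 = - (r * sin p) ^ 2 ->
  Lam l1 l2 l3 = ln (2 * p) - ln PI - ln (r * sin p).
Proof.
  intros Hr Hp -> HD. pose proof (sin_gt_0 p ltac:(lra) ltac:(lra)) as Hs.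
  assert (Hrs : 0 < r * sin p) by (apply Rmult_lt_0_compat; lra).
  unfold Lam. rewrite HD, Ropp_involutive, sqrt_pow2, ln_pow by lra.
  replace (- r * cos p / (r * sin p)) with (tan (p - PI / 2)).
  - rewrite atan_tan by lra. replace (PI + 2 * (p - PI / 2)) with (2 * p) by field.
    simpl INR. field.
  - unfold tan. replace (p - PI / 2) with (- (PI / 2 - p)) by ring.
    rewrite sin_neg, cos_neg, sin_shift, cos_shift. field; lra.
Qed.

Lemma ln_half_PI_ratio c p : 0 <= c < 1 -> 0 < p < PI ->
  ln (PI / 2 * ratio c p) = ln PI + ln (sin p) - ln (2 * p) - ln (1 + c * cos p).
Proof.
  intros Hc Hp. pose proof (one_plus_c_cos_pos c p Hc).
  pose proof (sin_gt_0 p ltac:(lra) ltac:(lra)).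
  replace (PI / 2 * ratio c p) with (PI * sin p / (2 * p) / (1 + c * cos p))
    by (unfold ratio; field; lra).
  assert (0 < PI * sin p / (2 * p)) by (apply Rdiv_lt_0_compat; nra).
  rewrite !ln_div, (ln_mult PI (sin p)); [reflexivity | nra ..].
Qed.

(* The gap between the objective and its bound splits into an AM-GM defect and the defect of
   [ln u <= u - 1]. *)
Lemma objective_polar x y c l1 l2 l3 r p : 0 < x -> 0 < y -> 0 <= c < 1 -> 0 < r ->
  0 < p < PI -> l1 = - r * cos p -> Dlam l1 l2 l3 = - (r * sin p) ^ 2 ->
  l1 * (x * y * c) + l2 * x ^ 2 + l3 * y ^ 2 - Lam l1 l2 l3 =
  x ^ 2 / 2 + y ^ 2 / 2 - 1 - ln (x * y) + ln (PI / 2 * ratio c p)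
  + (r * x * y - ((1 - 2 * l2) * x ^ 2 + (1 - 2 * l3) * y ^ 2) / 2)
  + (ln (r * x * y * (1 + c * cos p)) - (r * x * y * (1 + c * cos p) - 1)).
Proof.
  intros Hx Hy Hc Hr Hp El1 HD. pose proof (one_plus_c_cos_pos c p Hc).
  pose proof (sin_gt_0 p ltac:(lra) ltac:(lra)).
  rewrite (Lam_polar l1 l2 l3 r p Hr Hp El1 HD), ln_half_PI_ratio by lra.
  rewrite !ln_mult by (repeat apply Rmult_lt_0_compat; lra).
  subst l1; field.
Qed.

Lemma in_S_polar l1 l2 l3 : in_S l1 l2 l3 -> l1 < 0 ->
  exists r p, 0 < r /\ 0 < p < PI / 2 /\ l1 = - r * cos p /\
    r ^ 2 = (1 - 2 * l2) * (1 - 2 * l3) /\ Dlam l1 l2 l3 = - (r * sin p) ^ 2.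
Proof.
  intros [Hl2 [Hl3 HD]] Hl1. unfold Dlam in *.
  set (r := sqrt ((1 - 2 * l2) * (1 - 2 * l3))).
  assert (Hr2 : r ^ 2 = (1 - 2 * l2) * (1 - 2 * l3))
    by (unfold r; rewrite pow2_sqrt; [reflexivity | nra]).
  assert (Hr : 0 < r) by (apply sqrt_lt_R0; nra).
  assert (Hu : 0 < - l1 / r < 1).
  { split; [apply Rdiv_lt_0_compat; lra |].
    apply (Rmult_lt_reg_r r); [exact Hr |]. unfold Rdiv.
    rewrite Rmult_assoc, Rinv_l, Rmult_1_r, Rmult_1_l by lra. nra. }
  set (p := acos (- l1 / r)).
  assert (Hcp : cos p = - l1 / r) by (apply cos_acos; lra).
  exists r, p. split; [exact Hr |]. split; [exact (acos_in_0_PI2 _ Hu) |].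
  assert (El1 : l1 = - r * cos p) by (rewrite Hcp; field; lra).
  split; [exact El1 |]. split; [exact Hr2 |].
  assert (Es : sin p ^ 2 = 1 - cos p ^ 2) by (rewrite <- !Rsqr_pow2; apply sin2).
  rewrite <- Hr2, El1. replace ((r * sin p) ^ 2) with (r ^ 2 * sin p ^ 2) by ring.
  rewrite Es. ring.
Qed.

Lemma objective_le_ratio x y c l1 l2 l3 : 0 < x -> 0 < y -> 0 <= c < 1 ->
  in_S l1 l2 l3 -> l1 < 0 ->
  exists p, 0 < p < PI / 2 /\
    l1 * (x * y * c) + l2 * x ^ 2 + l3 * y ^ 2 - Lam l1 l2 l3 <=
    x ^ 2 / 2 + y ^ 2 / 2 - 1 - ln (x * y) + ln (PI / 2 * ratio c p).
Proof.
  intros Hx Hy Hc HS Hl1.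
  destruct (in_S_polar l1 l2 l3 HS Hl1) as [r [p [Hr [Hp [El1 [Hr2 HD]]]]]].
  exists p; split; [exact Hp |].
  rewrite (objective_polar x y c l1 l2 l3 r p) by (auto; lra).
  destruct HS as [Hl2 [Hl3 _]].
  set (a := 1 - 2 * l2) in *. set (b := 1 - 2 * l3) in *.
  assert (Hamgm : r * x * y <= (a * x ^ 2 + b * y ^ 2) / 2).
  { assert (Ea : a * (a * x ^ 2 + b * y ^ 2 - 2 * r * x * y) = (a * x - r * y) ^ 2)
      by (replace ((a * x - r * y) ^ 2) with (a ^ 2 * x ^ 2 - 2 * a * r * x * y + r ^ 2 * y ^ 2)
            by ring; rewrite Hr2; ring).
    assert (0 <= (a * x - r * y) ^ 2) by apply pow2_ge_0.
    assert (0 < a) by (unfold a; lra). nra. }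
  assert (Hu : 0 < r * x * y * (1 + c * cos p))
    by (pose proof (one_plus_c_cos_pos c p Hc); repeat apply Rmult_lt_0_compat; lra).
  pose proof (ln_le_sub_1 _ Hu). lra.
Qed.

Lemma objective_attains_ratio x y c p : 0 < x -> 0 < y -> 0 <= c < 1 -> 0 < p < PI / 2 ->
  LamStarMinus_set (x * y * c) (x ^ 2) (y ^ 2)
    (x ^ 2 / 2 + y ^ 2 / 2 - 1 - ln (x * y) + ln (PI / 2 * ratio c p)).
Proof.
  intros Hx Hy Hc Hp.
  pose proof (one_plus_c_cos_pos c p Hc) as Hk.
  pose proof (cos_in_01 p Hp) as Hcos.
  pose proof (sin_gt_0 p ltac:(lra) ltac:(lra)) as Hsin.
  (* This [r] makes both defects of [objective_polar] vanish. *)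
  set (r := / (x * y * (1 + c * cos p))).
  assert (Hr : 0 < r) by (apply Rinv_0_lt_compat; repeat apply Rmult_lt_0_compat; lra).
  assert (HD : Dlam (- r * cos p) ((1 - r * y / x) / 2) ((1 - r * x / y) / 2) = - (r * sin p) ^ 2).
  { assert (Es : sin p ^ 2 = 1 - cos p ^ 2) by (rewrite <- !Rsqr_pow2; apply sin2).
    unfold Dlam. replace ((r * sin p) ^ 2) with (r ^ 2 * sin p ^ 2) by ring.
    rewrite Es. field; lra. }
  exists (- r * cos p), ((1 - r * y / x) / 2), ((1 - r * x / y) / 2).
  split; [| split].
  - split; [| split].
    + assert (0 < r * y / x) by (apply Rdiv_lt_0_compat; nra). lra.
    + assert (0 < r * x / y) by (apply Rdiv_lt_0_compat; nra). lra.
    + rewrite HD. assert (0 < r * sin p) by nra. nra.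
  - nra.
  - rewrite (objective_polar x y c _ _ _ r p) by (auto; lra).
    replace (r * x * y * (1 + c * cos p)) with 1 by (unfold r; field; lra).
    rewrite ln_1.
    replace (r * x * y - ((1 - 2 * ((1 - r * y / x) / 2)) * x ^ 2
      + (1 - 2 * ((1 - r * x / y) / 2)) * y ^ 2) / 2) with 0 by (field; lra).
    ring.
Qed.

Lemma LamStarMinus_eq_of_ratio_lub x y c s : 0 < x -> 0 < y -> 0 <= c < 1 ->
  is_lub (ratio_set c) s ->
  LamStarMinus_eq (x * y * c) (x ^ 2) (y ^ 2)
    (x ^ 2 / 2 + y ^ 2 / 2 - 1 - ln (x * y) + ln (PI / 2 * s)).
Proof.
  intros Hx Hy Hc [Hub Hleast]. pose proof PI_gt_3.
  set (base := x ^ 2 / 2 + y ^ 2 / 2 - 1 - ln (x * y)).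
  assert (Hle_s : forall p, 0 < p < PI / 2 -> ratio c p <= s)
    by (intros p Hp; apply Hub; exists p; split; [exact Hp | reflexivity]).
  assert (Hpos : forall p, 0 < p < PI / 2 -> 0 < PI / 2 * ratio c p)
    by (intros p Hp; pose proof (ratio_pos c p Hc ltac:(lra)); nra).
  assert (Hs : 0 < PI / 2 * s)
    by (pose proof (Hle_s (PI / 4) ltac:(lra)); pose proof (Hpos (PI / 4) ltac:(lra)); nra).
  split.
  - intros v [l1 [l2 [l3 [HS [Hl1 ->]]]]].
    destruct (objective_le_ratio x y c l1 l2 l3 Hx Hy Hc HS Hl1) as [p [Hp Hle]].
    pose proof (ln_le _ (PI / 2 * s) (Hpos p Hp)
      (Rmult_le_compat_l (PI / 2) _ _ ltac:(lra) (Hle_s p Hp))).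
    fold base in Hle. lra.
  - intros M HM.
    assert (HK : PI / 2 * s <= exp (M - base)).
    { replace (exp (M - base)) with (PI / 2 * (2 / PI * exp (M - base))) by (field; lra).
      apply Rmult_le_compat_l; [lra |].
      apply Hleast. intros v [p [Hp ->]].
      pose proof (HM _ (objective_attains_ratio x y c p Hx Hy Hc Hp)) as Hv.
      pose proof (le_exp_of_ln_le _ (M - base) (Hpos p Hp) ltac:(fold base in Hv; lra)).
      replace (ratio c p) with (2 / PI * (PI / 2 * ratio c p)) by (field; lra).
      apply Rmult_le_compat_l; [apply Rlt_le, Rdiv_lt_0_compat |]; lra. }
    pose proof (ln_le _ _ Hs HK). rewrite ln_exp in *. lra.
Qed.

Lemma inv_cos_gt_1 p : 0 < p < PI / 2 -> 1 < / cos p.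
Proof.
  intros Hp. pose proof (cos_in_01 p Hp).
  rewrite <- Rinv_1. apply Rinv_lt_contravar; lra.
Qed.

Lemma acos_inv_spec b : 1 < b -> 0 < acos (/ b) < PI / 2 /\ / cos (acos (/ b)) = b.
Proof.
  intros Hb.
  assert (Hib : 0 < / b < 1)
    by (split; [apply Rinv_0_lt_compat | rewrite <- Rinv_1; apply Rinv_lt_contravar]; lra).
  split; [exact (acos_in_0_PI2 _ Hib) |].
  rewrite cos_acos, Rinv_inv by lra. reflexivity.
Qed.

(* With [b = 1 / cos p]: [acos (1 / b) = p] and [sqrt (b^2 - 1) = tan p]. *)
Lemma beta1_eq_iff_crit th p : 0 < cos th -> 0 < p < PI / 2 ->
  beta1_eq th (/ cos p) <-> crit (cos th) p = 0.
Proof.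
  intros Hc Hp. unfold beta1_eq, crit. set (c := cos th) in *.
  pose proof (cos_in_01 p Hp) as Hcos. pose proof (sin_gt_0 p ltac:(lra) ltac:(lra)).
  rewrite Rinv_inv, acos_cos by lra.
  assert (Es : sin p ^ 2 = 1 - cos p ^ 2) by (rewrite <- !Rsqr_pow2; apply sin2).
  replace ((/ cos p) ^ 2 - 1) with ((sin p / cos p) ^ 2)
    by (unfold Rdiv; rewrite Rpow_mult_distr, Es; field; lra).
  rewrite sqrt_pow2 by (apply Rdiv_le_0_compat; lra).
  replace ((/ cos p + c) * (sin p / cos p) / (/ cos p * (/ cos p * c + 1)))
    with (sin p * (1 + c * cos p) / (c + cos p)) by (field; lra).
  split; intros E.
  - assert (p * (c + cos p) = sin p * (1 + c * cos p)) by (rewrite E at 1; field; lra).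
    lra.
  - apply (Rmult_eq_reg_r (c + cos p)); [| lra]. field_simplify; lra.
Qed.

Lemma half_PI_ratio_at_crit_zero c p : 0 < c -> 0 < p < PI / 2 -> crit c p = 0 ->
  PI / 2 * ratio c p = PI * / cos p * (/ cos p * c + 1) / (2 * (c + / cos p) ^ 2).
Proof.
  intros Hc Hp E. unfold crit in E. unfold ratio.
  pose proof (cos_in_01 p Hp) as Hcos. pose proof (sin_gt_0 p ltac:(lra) ltac:(lra)).
  replace p with (sin p * (1 + c * cos p) / (c + cos p)) at 2
    by (apply (Rmult_eq_reg_r (c + cos p)); [field_simplify |]; lra).
  field; nra.
Qed.

Lemma le_cos_of_le_acos u t : -1 <= u <= 1 -> 0 <= t -> t <= acos u -> u <= cos t.
Proof.
  intros Hu Ht Hle. pose proof (acos_bound u).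
  rewrite <- (cos_acos u Hu) at 1. apply cos_decr_1; lra.
Qed.

Lemma cos_lt_of_acos_lt u t : -1 <= u <= 1 -> acos u < t <= PI -> cos t < u.
Proof.
  intros Hu Ht. pose proof (acos_bound u).
  rewrite <- (cos_acos u Hu). apply cos_decreasing_1; lra.
Qed.

Theorem lemma10 (x y th : R) :
  0 < x -> 0 < y -> 0 < th < PI / 2 ->
  let z1 := x * y * cos th in
  let z2 := x ^ 2 in
  let z3 := y ^ 2 in
  let base := x ^ 2 / 2 + y ^ 2 / 2 - 1 - ln (x * y) in
  (th <= acos (2 / PI) ->
     LamStarMinus_eq z1 z2 z3 base) /\
  (acos (2 / PI) < th < PI / 3 ->
     (exists! b : R, 1 < b /\ beta1_eq th b) /\
     (forall b : R, 1 < b -> beta1_eq th b ->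
        LamStarMinus_eq z1 z2 z3
          (base + ln (PI * b * (b * cos th + 1) / (2 * (cos th + b) ^ 2))))) /\
  (PI / 3 <= th ->
     LamStarMinus_eq z1 z2 z3 (base + ln (PI / (2 * (1 + cos th))))).
Proof.
  intros Hx Hy Hth; cbv zeta. pose proof PI_gt_3.
  pose proof (cos_in_01 th Hth) as Hc.
  assert (H2PI : -1 <= 2 / PI <= 1).
  { assert (0 < 2 / PI) by (apply Rdiv_lt_0_compat; lra).
    assert (2 / PI * PI = 2) by (field; lra). nra. }
  split; [| split].
  - intros Hle. pose proof (le_cos_of_le_acos (2 / PI) th H2PI ltac:(lra) Hle).
    replace (x ^ 2 / 2 + y ^ 2 / 2 - 1 - ln (x * y))
      with (x ^ 2 / 2 + y ^ 2 / 2 - 1 - ln (x * y) + ln (PI / 2 * (2 / PI)))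
      by (replace (PI / 2 * (2 / PI)) with 1 by (field; lra); rewrite ln_1; ring).
    apply LamStarMinus_eq_of_ratio_lub, ratio_lub_large; lra.
  - intros Hmid. pose proof (cos_lt_of_acos_lt (2 / PI) th H2PI ltac:(lra)).
    assert (1 / 2 < cos th) by (rewrite <- cos_PI3; apply cos_decreasing_1; lra).
    destruct (crit_zero_exists (cos th)) as [p0 [Hp0 E0]]; [lra | lra |].
    split.
    + exists (/ cos p0). split; [split; [apply inv_cos_gt_1 | apply beta1_eq_iff_crit]; easy |].
      intros b [Hb Hbeq]. destruct (acos_inv_spec b Hb) as [Hp Eb].
      rewrite <- Eb in Hbeq |- *. apply beta1_eq_iff_crit in Hbeq; [| lra | exact Hp].
      f_equal. f_equal. apply (crit_zero_unique (cos th)); lra.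
    + intros b Hb Hbeq. destruct (acos_inv_spec b Hb) as [Hp Eb].
      rewrite <- Eb in Hbeq |- *. apply beta1_eq_iff_crit in Hbeq; [| lra | exact Hp].
      rewrite <- half_PI_ratio_at_crit_zero by (easy || lra).
      apply LamStarMinus_eq_of_ratio_lub, ratio_lub_crit; easy || lra.
  - intros Hge. assert (cos th <= 1 / 2) by (rewrite <- cos_PI3; apply cos_decr_1; lra).
    replace (PI / (2 * (1 + cos th))) with (PI / 2 * (1 / (1 + cos th))) by (field; lra).
    apply LamStarMinus_eq_of_ratio_lub, ratio_lub_small; lra.
Qed.
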